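(* Let $f_1,\dots,f_n:\mathbb{R}^d\to\mathbb{R}$ be such that each $f_i$ is $L_i$-smooth and has a minimizer $x_i$, let $\alpha_1,\dots,\alpha_n\in(0,1)$ and $\tilde f(x) = \frac{1}{n}\sum_{i=1}^n f_i(\alpha_i x + (1-\alpha_i)x_i)$. Let $x^\alpha$ be a minimizer of $\tilde f$ and $L_\alpha = \frac{1}{n}\sum_i\alpha_i^2 L_i$. Then for every $x\in\mathbb{R}^d$, \[ \|\nabla\tilde f(x)\| \leq L_\alpha\|x - x^\alpha\| \quad\text{and}\quad \tilde f(x) - \tilde f(x^\alpha) \leq \frac{L_\alpha}{2}\|x - x^\alpha\|^2. \]
   Context: A differentiable $g$ is $L$-smooth if $\|\nabla g(x)-\nabla g(y)\|\leq L\|x-y\|$ for all $x,y$. *)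

(* R^d is 'rV[R]_d with the Euclidean norm. *)
From HB Require Import structures.
From mathcomp Require Import all_boot all_order all_algebra.
From mathcomp Require Import all_classical all_reals all_analysis.
Set Implicit Arguments. Unset Strict Implicit. Unset Printing Implicit Defensive.
Import Order.TTheory GRing.Theory Num.Theory.
Import numFieldNormedType.Exports.
Local Open Scope ring_scope.

Definition enorm {R : realType} {d : nat} (v : 'rV[R]_d) : R :=
  Num.sqrt (\sum_(i < d) v ord0 i ^+ 2).

Definition grad {R : realType} {d : nat} (g : 'rV[R]_d -> R) (x : 'rV[R]_d)
  : 'rV[R]_d := \row_(i < d) derive g x (delta_mx 0 i).

Definition Lsmooth {R : realType} {d : nat} (L : R) (g : 'rV[R]_d -> R) : Prop :=
  (forall x, differentiable g x) /\
  (forall x y, enorm (grad g x - grad g y) <= L * enorm (x - y)).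

Definition is_minimizer {R : realType} {d : nat} (g : 'rV[R]_d -> R)
  (x : 'rV[R]_d) : Prop := forall y, g x <= g y.

Definition ftilde {R : realType} {d n : nat} (f : 'I_n -> 'rV[R]_d -> R)
  (alpha : 'I_n -> R) (xs : 'I_n -> 'rV[R]_d) (x : 'rV[R]_d) : R :=
  n%:R^-1 * \sum_(i < n) f i (alpha i *: x + (1 - alpha i) *: xs i).

Definition Lalpha {R : realType} {n : nat} (alpha : 'I_n -> R) (L : 'I_n -> R) : R :=
  n%:R^-1 * \sum_(i < n) alpha i ^+ 2 * L i.

From HB Require Import structures.
From mathcomp Require Import all_boot all_order all_algebra.
From mathcomp Require Import all_classical all_reals all_analysis.
From mathcomp Require Import ring lra.
Import Order.TTheory GRing.Theory Num.Theory.
Import numFieldNormedType.Exports.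
Set Implicit Arguments. Unset Strict Implicit. Unset Printing Implicit Defensive.
Local Open Scope classical_set_scope.
Local Open Scope ring_scope.

(* The gradient of [ftilde] is the average of the gradients of the [f i] at
   [alpha i *: x + (1 - alpha i) *: xs i], scaled by [alpha i]; since these
   points move by [alpha i *: (x - y)] when [x] moves to [y], [ftilde] is
   [Lalpha]-smooth.  Its gradient vanishes at the minimiser [xa], which gives
   the first bound, and the second is the descent lemma
   [g x - g y - <grad g y, x - y> <= L/2 |x - y|^2] for [L]-smooth [g],
   obtained from the mean value theorem on the segment [[y, x]]. *)

Section EuclideanNorm.
Variables (R : realType) (d : nat).
Implicit Types u v w : 'rV[R]_d.

Definition dotp u v := \sum_(j < d) u ord0 j * v ord0 j.

Lemma dotp0l v : dotp 0 v = 0.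
Proof. by rewrite /dotp big1 // => j _; rewrite mxE mul0r. Qed.

Lemma dotpBl u v w : dotp (u - v) w = dotp u w - dotp v w.
Proof.
by rewrite /dotp -sumrB; apply: eq_bigr => j _; rewrite !mxE mulrBl.
Qed.

Lemma lagrange_identity u v :
  \sum_i \sum_j (u ord0 i * v ord0 j - u ord0 j * v ord0 i) ^+ 2 =
  2 * ((\sum_j u ord0 j ^+ 2) * (\sum_j v ord0 j ^+ 2) - dotp u v ^+ 2).
Proof.
have sum_prod (F G : 'I_d -> R) :
    \sum_i \sum_j F i * G j = (\sum_i F i) * (\sum_j G j).
  by rewrite mulr_suml; apply: eq_bigr => i _; rewrite mulr_sumr.
have expand i j : (u ord0 i * v ord0 j - u ord0 j * v ord0 i) ^+ 2 =
   u ord0 i ^+ 2 * v ord0 j ^+ 2 + v ord0 i ^+ 2 * u ord0 j ^+ 2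
   - 2 * ((u ord0 i * v ord0 i) * (u ord0 j * v ord0 j)) by ring.
under eq_bigr => i _ do under eq_bigr => j _ do rewrite expand.
under eq_bigr => i _ do rewrite sumrB big_split /=.
rewrite sumrB big_split /= !sum_prod.
have -> : \sum_i \sum_j 2 * (u ord0 i * v ord0 i * (u ord0 j * v ord0 j)) =
          2 * dotp u v ^+ 2.
  rewrite expr2 -sum_prod mulr_sumr.
  by apply: eq_bigr => i _; rewrite mulr_sumr.
ring.
Qed.

Lemma sumsq_ge0 u : 0 <= \sum_j u ord0 j ^+ 2.
Proof. by apply: sumr_ge0 => j _; apply: sqr_ge0. Qed.

Lemma cauchy_schwarz_sqr u v :
  dotp u v ^+ 2 <= (\sum_j u ord0 j ^+ 2) * (\sum_j v ord0 j ^+ 2).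
Proof.
have : 0 <= \sum_i \sum_j (u ord0 i * v ord0 j - u ord0 j * v ord0 i) ^+ 2.
  by apply: sumr_ge0 => i _; apply: sumr_ge0 => j _; apply: sqr_ge0.
rewrite lagrange_identity; lra.
Qed.

Lemma enorm_ge0 u : 0 <= enorm u.
Proof. exact: sqrtr_ge0. Qed.

Lemma enorm_sqr u : enorm u ^+ 2 = \sum_j u ord0 j ^+ 2.
Proof. by rewrite /enorm sqr_sqrtr // sumsq_ge0. Qed.

Lemma enorm0 : enorm (0 : 'rV[R]_d) = 0.
Proof. by rewrite /enorm big1 ?sqrtr0 // => j _; rewrite mxE expr0n. Qed.

Lemma dotp_le_enorm u v : dotp u v <= enorm u * enorm v.
Proof.
apply: le_trans (ler_norm _) _.
rewrite /enorm -sqrtrM ?sumsq_ge0 // -sqrtr_sqr ler_sqrt.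
  exact: cauchy_schwarz_sqr.
by rewrite mulr_ge0 ?sumsq_ge0.
Qed.

Lemma enormD u v : enorm (u + v) <= enorm u + enorm v.
Proof.
rewrite -(ler_pXn2r (n := 2)) // ?nnegrE ?addr_ge0 ?enorm_ge0 //.
have -> : enorm (u + v) ^+ 2 = enorm u ^+ 2 + 2 * dotp u v + enorm v ^+ 2.
  rewrite !enorm_sqr /dotp mulr_sumr -!big_split /=.
  by apply: eq_bigr => j _; rewrite !mxE; ring.
have := dotp_le_enorm u v; rewrite sqrrD; lra.
Qed.

Lemma enormZ a u : enorm (a *: u) = `|a| * enorm u.
Proof.
rewrite /enorm -sqrtr_sqr -sqrtrM ?sqr_ge0 // mulr_sumr.
by congr Num.sqrt; apply: eq_bigr => j _; rewrite !mxE exprMn.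
Qed.

Lemma enorm_sum n (F : 'I_n -> 'rV[R]_d) :
  enorm (\sum_(i < n) F i) <= \sum_(i < n) enorm (F i).
Proof.
elim/big_ind2: _ => [|x1 x2 y1 y2 le1 le2|//]; first by rewrite enorm0.
exact: le_trans (enormD _ _) (lerD le1 le2).
Qed.

End EuclideanNorm.

Section DirectionalDerivatives.
Variable R : realType.

Lemma derive_eq_along_lines {U V W : normedModType R} (p : U -> W) (g : V -> W)
    a u b w :
  (forall s : R, p (s *: u + a) = g (s *: w + b)) ->
  derive p a u = derive g b w /\ (derivable p a u <-> derivable g b w).
Proof.
move=> pg; rewrite /derive /derivable.
suff -> : (fun h : R => h^-1 *: ((p \o shift a) (h *: u) - p a)) =
          (fun h : R => h^-1 *: ((g \o shift b) (h *: w) - g b)) by [].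
apply/funext => h /=; have := pg 0; rewrite !scale0r !add0r => ->.
by rewrite pg.
Qed.

Lemma is_derive_line {V W : normedModType R} (g : V -> W) y h t :
  derivable g (t *: h + y) h ->
  is_derive t 1 (fun s : R => g (s *: h + y)) (derive g (t *: h + y) h).
Proof.
pose gl s := g (s *: h + y).
have shift_line (s : R) : gl (s *: 1 + t) = g (s *: h + (t *: h + y)).
  by rewrite /gl -[s *: 1]/(s * 1) mulr1 scalerDl addrA.
have [<- derivable_iff] := derive_eq_along_lines shift_line.
by move=> dg; apply: DeriveDef => //; apply/derivable_iff.
Qed.

Lemma derive_eq0_at_min {V : normedModType R} (g : V -> R) x v :
  (forall t : R, derivable g (t *: v + x) v) -> (forall y, g x <= g y) ->
  derive g x v = 0.
Proof.
move=> dg gmin; have := is_derive_line (dg 0); rewrite scale0r add0r => dg0.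
have <- : derive (fun s : R => g (s *: v + x)) 0 1 = derive g x v.
  exact: derive_val.
apply: derive_val.
apply: (@derive1_at_min _ _ (-1) 1) => [|t _||t _]; rewrite ?in_itv /=; try lra.
- by have := is_derive_line (dg t); case.
- by rewrite scale0r add0r; apply: gmin.
Qed.

Lemma derive_scale_shift {V W : normedModType R} (g : V -> W) a b x v :
  differentiable g (a *: x + b) ->
  derive (fun z => g (a *: z + b)) x v = a *: derive g (a *: x + b) v.
Proof.
move=> dg.
have along s : g (a *: (s *: v + x) + b) = g (s *: (a *: v) + (a *: x + b)).
  by rewrite scalerDr !scalerA mulrC addrA.
have [-> _] := derive_eq_along_lines (p := fun z => g (a *: z + b)) along.
by rewrite !deriveE // linearZ.
Qed.

Variable d : nat.

Lemma derive_grad (g : 'rV[R]_d -> R) z v : differentiable g z ->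
  derive g z v = dotp (grad g z) v.
Proof.
move=> dg; rewrite deriveE // {1}(row_sum_delta v) linear_sum /dotp.
apply: eq_bigr => j _; rewrite linearZ /= mxE deriveE //.
by rewrite /GRing.scale /= mulrC.
Qed.

Lemma grad_eq0_at_min (g : 'rV[R]_d -> R) x :
  (forall z, differentiable g z) -> is_minimizer g x -> grad g x = 0.
Proof.
move=> dg gmin; apply/rowP => j; rewrite !mxE.
by apply: derive_eq0_at_min gmin => t; apply: diff_derivable.
Qed.

End DirectionalDerivatives.

Lemma Lsmooth_descent (R : realType) (d : nat) (g : 'rV[R]_d -> R) L x y :
  Lsmooth L g ->
  g x - g y - dotp (grad g y) (x - y) <= L / 2 * enorm (x - y) ^+ 2.
Proof.
move=> [dg lip]; set h := x - y; set c := dotp (grad g y) h.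
set K := L / 2 * enorm h ^+ 2.
pose q t := g (t *: h + y) - (c * t + K * t ^+ 2).
have dq (t : R) :
    is_derive t (1 : R) q (dotp (grad g (t *: h + y)) h - (c + K * (2 * t))).
  rewrite -derive_grad //; apply: is_deriveB.
    exact/is_derive_line/diff_derivable.
  have -> : (fun s => c * s + K * s ^+ 2) = c \*: id + K \*: id ^+ 2 by [].
  by apply: is_derive_eq; rewrite /GRing.scale /= !mulr1 expr1 mulr_natl.
have qcont : {within `[0, 1], continuous q}.
  apply: continuous_subspaceT => t; apply: differentiable_continuous.
  by apply/derivable1_diffP; case: (dq t).
have [t t01] := MVT ltr01 (fun t _ => dq t) qcont.
have t_gt0 : 0 < t by move: t01; rewrite in_itv /= => /andP[].
have slope_le : dotp (grad g (t *: h + y)) h - c <= K * (2 * t).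
  rewrite -dotpBl; apply: le_trans (dotp_le_enorm _ _) _.
  have := lip (t *: h + y) y.
  rewrite addrK enormZ (ger0_norm (ltW t_gt0)) => lip_t.
  have -> : K * (2 * t) = L * (t * enorm h) * enorm h.
    by rewrite /K expr2; field.
  by apply: ler_wpM2r => //; apply: enorm_ge0.
rewrite /q scale1r scale0r add0r subrK expr0n /= !mulr0 expr1n !mulr1.
rewrite !addr0 subr0.
lra.
Qed.

Section Ftilde.
Variables (R : realType) (d n : nat).
Variables (f : 'I_n -> 'rV[R]_d -> R) (alpha : 'I_n -> R).
Variable xs : 'I_n -> 'rV[R]_d.

Let mix i x := alpha i *: x + (1 - alpha i) *: xs i.

Lemma mixB i x y : mix i x - mix i y = alpha i *: (x - y).
Proof. by rewrite /mix opprD addrACA subrr addr0 -scalerBr. Qed.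

Lemma ftildeE :
  ftilde f alpha xs = n%:R^-1 \*: \sum_(i < n) (fun x => f i (mix i x)).
Proof. by apply/funext => x; rewrite /ftilde /= fct_sumE. Qed.

Hypothesis df : forall i x, differentiable (f i) x.

Lemma differentiable_mix_comp i x : differentiable (fun z => f i (mix i z)) x.
Proof. by apply: differentiable_comp. Qed.

Lemma differentiable_ftilde x : differentiable (ftilde f alpha xs) x.
Proof.
rewrite ftildeE; apply: differentiableZ; apply: differentiable_sum => i.
exact: differentiable_mix_comp.
Qed.

Lemma grad_ftilde x :
  grad (ftilde f alpha xs) x =
  n%:R^-1 *: \sum_(i < n) alpha i *: grad (f i) (mix i x).
Proof.
apply/rowP => j; rewrite !mxE ftildeE deriveZ; last first.
  apply/diff_derivable/differentiable_sum => i.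
  exact: differentiable_mix_comp.
rewrite derive_sum => [|i]; last exact/diff_derivable/differentiable_mix_comp.
rewrite summxE; congr (_ * _); apply: eq_bigr => i _.
by rewrite derive_scale_shift // !mxE.
Qed.

End Ftilde.

Lemma Lsmooth_ftilde (R : realType) (d n : nat) (f : 'I_n -> 'rV[R]_d -> R)
    (L alpha : 'I_n -> R) (xs : 'I_n -> 'rV[R]_d) :
  (forall i, Lsmooth (L i) (f i)) ->
  Lsmooth (Lalpha alpha L) (ftilde f alpha xs).
Proof.
move=> smooth; have df i := (smooth i).1.
split=> [|x y]; first exact: differentiable_ftilde.
rewrite !grad_ftilde // -scalerBr -sumrB enormZ ger0_norm ?invr_ge0 ?ler0n //.
rewrite /Lalpha -mulrA ler_wpM2l ?invr_ge0 ?ler0n //.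
apply: le_trans (enorm_sum _) _; rewrite mulr_suml; apply: ler_sum => i _.
have := (smooth i).2 (alpha i *: x + (1 - alpha i) *: xs i)
                     (alpha i *: y + (1 - alpha i) *: xs i).
rewrite -scalerBr mixB !enormZ => lip_i.
have -> : alpha i ^+ 2 * L i * enorm (x - y) =
          `|alpha i| * (L i * (`|alpha i| * enorm (x - y))).
  by rewrite -[alpha i ^+ 2]real_normK ?num_real //; ring.
by rewrite ler_wpM2l.
Qed.

Unset Implicit Arguments.

Theorem proposition4 (R : realType) (d n : nat)
  (f : 'I_n -> 'rV[R]_d -> R) (L : 'I_n -> R) (xs : 'I_n -> 'rV[R]_d)
  (alpha : 'I_n -> R)
  (hsmooth : forall i, Lsmooth (L i) (f i))
  (hmin : forall i, is_minimizer (f i) (xs i))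
  (halpha : forall i, 0 < alpha i < 1)
  (xa : 'rV[R]_d) (hxa : is_minimizer (ftilde f alpha xs) xa) :
  forall x : 'rV[R]_d,
    enorm (grad (ftilde f alpha xs) x) <= Lalpha alpha L * enorm (x - xa) /\
    ftilde f alpha xs x - ftilde f alpha xs xa
      <= Lalpha alpha L / 2 * enorm (x - xa) ^+ 2.
Proof.
move=> x; have smooth := Lsmooth_ftilde alpha xs hsmooth.
have grad_xa : grad (ftilde f alpha xs) xa = 0.
  exact: grad_eq0_at_min smooth.1 hxa.
split; first by have := smooth.2 x xa; rewrite grad_xa subr0.
by have := Lsmooth_descent x xa smooth; rewrite grad_xa dotp0l subr0.
Qed.
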